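(* Let $m_1,\dots,m_k$ be natural numbers with greatest common divisor $q$, and let $\chi_1,\dots,\chi_k\in\mathbb{Z}_2$. Suppose that either (1) there exist $i,j\in\{1,\dots,k\}$ with $m_i$ even, $\chi_i\neq0$ and $m_j$ odd; or (2) there exist $i,j\in\{1,\dots,k\}$ with $m_i$ odd, $\chi_i=0$ and $\chi_j\neq0$. Then there exists $N\in\mathbb{N}$ such that for every $n\ge N$ and every $\chi\in\mathbb{Z}_2$ there are $l_1,\dots,l_k\in\mathbb{N}$ with \[ l_1m_1+\dots+l_km_k=nq\quad\text{and}\quad l_1\chi_1+\dots+l_k\chi_k=\chi. \]
   Context: $\mathbb{N}=\{1,2,\dots\}$; $\mathbb{Z}_2=\mathbb{Z}/2\mathbb{Z}$, and $l\chi$ for $l\in\mathbb{N}$, $\chi\in\mathbb{Z}_2$ is the usual integer multiple in $\mathbb{Z}_2$. *)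

From mathcomp Require Import all_boot all_order all_algebra.
Set Implicit Arguments. Unset Strict Implicit. Unset Printing Implicit Defensive.
Import GRing.Theory.
(* Z_2 is modelled as 'Z_2 (= ordinal 2 with its ring structure);
   l chi is the iterated sum chi *+ l. *)

From mathcomp Require Import all_boot all_order all_algebra zify.
Import GRing.Theory Num.Theory.

(* Let g be the gcd of the m_i and a an integer Bezout vector, sum_i a_i m_i = g.
   For r < c the vector (B + r a_i)_i with B large is positive and has weight
   (s + r) g, so c consecutive multiples of g are positive combinations; adding
   multiples of m_p = c g then yields every large multiple of g.  The Z_2-sum is
   adjusted by a final summand m_p m_q, added either as m_q more copies of m_p or
   as m_p more copies of m_q: the hypotheses say precisely that these two choices
   give different Z_2-sums. *)

Lemma Z2_mulrn (x : 'Z_2) n : (x *+ n = if odd n then x else 0)%R.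
Proof.
elim: n => // n IH; rewrite mulrS IH /=; case: (odd n); rewrite /= ?addr0 //.
by case: x {IH} => [[|[|//]] ?]; apply: val_inj.
Qed.

Lemma Z2_cover (x u v : 'Z_2) : u != v -> x = u \/ x = v.
Proof.
case: x u v => [[|[|//]] ?] [[|[|//]] ?] [[|[|//]] ?] //= _;
  by [left; apply: val_inj | right; apply: val_inj].
Qed.

Lemma exists_cross_mulrn_neq (I : finType) (m : I -> nat) (chi : I -> 'Z_2) :
    (exists i j, ~~ odd (m i) /\ chi i != 0%R /\ odd (m j)) \/
    (exists i j, odd (m i) /\ chi i = 0%R /\ chi j != 0%R) ->
  exists p q, (chi p *+ m q != chi q *+ m p)%R.
Proof.
case=> [[i [j [ev_mi [chi_i odd_mj]]]] | [i [j [odd_mi [chi_i chi_j]]]]].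
- by exists i, j; rewrite !Z2_mulrn odd_mj (negbTE ev_mi).
- by exists j, i; rewrite !Z2_mulrn odd_mi chi_i; case: ifP.
Qed.

Section PositiveCombinations.
Context {I : finType} (m : I -> nat).

Local Notation g := (\big[gcdn/0]_i m i).

Definition pos_comb (w : nat) :=
  exists l : I -> nat, (forall i, 0 < l i) /\ \sum_i l i * m i = w.

Lemma biggcdn_Bezout : exists a : I -> int, (\sum_i a i * (m i)%:Z)%R = g.
Proof.
apply: (big_ind (fun d : nat => exists a : I -> int, (\sum_i a i * (m i)%:Z)%R = d)).
- by exists (fun=> 0%R); rewrite big1 // => i _; rewrite mul0r.
- move=> x y [a sum_a] [b sum_b]; have [u [v uv]] := Bezoutz x y.
  exists (fun i => u * a i + v * b i)%R.
  rewrite -[RHS]/(gcdz x y) -uv -sum_a -sum_b !mulr_sumr -big_split /=.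
  by apply: eq_bigr => i _; rewrite mulrDl !mulrA.
- move=> j _; exists (fun i => (i == j)%:R)%R.
  by rewrite (bigD1 j) //= eqxx mul1r big1 ?addr0 // => i /negbTE ->; rewrite mul0r.
Qed.

Lemma sum_bump_muln (l : I -> nat) p a :
  \sum_i (l i + (i == p) * a) * m i = \sum_i l i * m i + a * m p.
Proof.
rewrite (eq_bigr (fun i => l i * m i + (i == p) * a * m i)) => [|i _]; last first.
  by rewrite mulnDl.
rewrite big_split /=; congr (_ + _).
by rewrite (bigD1 p) //= eqxx mul1n big1 ?addn0 // => i /negbTE ->.
Qed.

Lemma sum_bump_mulrn (V : nmodType) (F : I -> V) (l : I -> nat) p a :
  (\sum_i F i *+ (l i + (i == p) * a) = \sum_i F i *+ l i + F p *+ a)%R.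
Proof.
rewrite (eq_bigr (fun i => F i *+ l i + F i *+ ((i == p) * a)))%R => [|i _]; last first.
  by rewrite mulrnDr.
rewrite big_split /=; congr (_ + _)%R.
by rewrite (bigD1 p) //= eqxx mul1n big1 ?addr0 // => i /negbTE ->.
Qed.

Lemma pos_comb_addm w p a : pos_comb w -> pos_comb (w + a * m p).
Proof.
move=> [l [l_gt0 <-]]; exists (fun i => l i + (i == p) * a).
by split=> [i|]; [rewrite ltn_addr | rewrite sum_bump_muln].
Qed.

Lemma pos_comb_int (L : I -> int) (w : nat) :
  (forall i, 0 < L i)%R -> (\sum_i L i * (m i)%:Z)%R = w -> pos_comb w.
Proof.
move=> L_gt0 sumL; exists (fun i => `|L i|%N); split=> [i|].
  by rewrite absz_gt0 lt0r_neq0.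
apply/eqP; rewrite -eqz_nat -sumL -natz natr_sum; apply/eqP/eq_bigr => i _.
by rewrite natrM !natz gtz0_abs.
Qed.

Lemma pos_comb_window c : exists s, forall r, r < c -> pos_comb ((s + r) * g).
Proof.
have [a sum_a] := biggcdn_Bezout.
pose A := \sum_i `|a i|%N; pose B := (c * A).+1.
have a_le_A i : `|a i|%N <= A by rewrite /A (bigD1 i) //= leq_addr.
have g_dvd_sum : g %| \sum_i m i.
  by apply: dvdn_sum => i _; apply: biggcdn_inf (dvdnn _).
exists (B * ((\sum_i m i) %/ g)) => r lt_rc.
apply: (@pos_comb_int (fun i => B%:Z + r%:Z * a i)%R) => [i|].
  have := a_le_A i; rewrite /B; nia.
rewrite (eq_bigr (fun i => B%:Z * (m i)%:Z + r%:Z * (a i * (m i)%:Z)))%R => [|i _]; last first.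
  by rewrite mulrDl mulrA.
have sum_mz : (\sum_i (m i)%:Z)%R = \sum_i m i.
  by rewrite -natz natr_sum; apply: eq_bigr => i _; rewrite natz.
rewrite big_split /= -!mulr_sumr sum_a sum_mz.
by rewrite mulnDl -mulnA divnK // PoszD.
Qed.

Lemma pos_comb_large p : 0 < m p -> exists N, forall n, N <= n -> pos_comb (n * g).
Proof.
move=> m_p_gt0.
have g_dvd_mp : g %| m p by apply: biggcdn_inf (dvdnn _).
set c := m p %/ g.
have mp_eq : m p = c * g by rewrite divnK.
have g_gt0 : 0 < g := dvdn_gt0 m_p_gt0 g_dvd_mp.
have c_gt0 : 0 < c by rewrite (divn_gt0 _ g_gt0); exact: dvdn_leq.
have [s window] := pos_comb_window c.
exists s => n le_sn.
have -> : n * g = (s + (n - s) %% c) * g + (n - s) %/ c * m p.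
  by rewrite mp_eq mulnA -mulnDl addnAC -addnA -divn_eq subnKC.
by apply/pos_comb_addm/window; rewrite ltn_mod.
Qed.

Lemma pos_comb_addmm_Z2 (chi : I -> 'Z_2) p q w x :
    (chi p *+ m q != chi q *+ m p)%R -> pos_comb w ->
  exists l : I -> nat, (forall i, 0 < l i) /\
    \sum_i l i * m i = w + m p * m q /\ (\sum_i chi i *+ l i)%R = x.
Proof.
move=> chi_pq [l [l_gt0 sum_l]].
set S := (\sum_i chi i *+ l i)%R.
have : (S + chi p *+ m q != S + chi q *+ m p)%R by rewrite (inj_eq (addrI S)).
case/(Z2_cover x) => x_eq.
- exists (fun i => l i + (i == p) * m q); split=> [i|]; first by rewrite ltn_addr.
  by rewrite sum_bump_muln sum_bump_mulrn sum_l mulnC x_eq.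
- exists (fun i => l i + (i == q) * m p); split=> [i|]; first by rewrite ltn_addr.
  by rewrite sum_bump_muln sum_bump_mulrn sum_l x_eq.
Qed.

End PositiveCombinations.

Theorem lemma4p7 (k : nat) (m : 'I_k -> nat) (chi : 'I_k -> 'Z_2) :
  (forall i, 0 < m i)%N ->
  ((exists i j, ~~ odd (m i) /\ chi i != 0%R /\ odd (m j)) \/
   (exists i j, odd (m i) /\ chi i = 0%R /\ chi j != 0%R)) ->
  exists N : nat, (0 < N)%N /\
    forall (n : nat) (x : 'Z_2), (N <= n)%N ->
      exists l : 'I_k -> nat, (forall i, 0 < l i)%N /\
        (\sum_(i < k) l i * m i)%N = (n * \big[gcdn/0%N]_(i < k) m i)%N /\
        (\sum_(i < k) chi i *+ l i)%R = x.
Proof.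
move=> m_gt0 /exists_cross_mulrn_neq [p [q chi_pq]].
have [N large] := pos_comb_large m p (m_gt0 p).
set g := \big[gcdn/0]_(i < k) m i.
set d := m p %/ g * m q.
have dg_eq : d * g = m p * m q.
  by rewrite mulnAC divnK //; apply: biggcdn_inf (dvdnn _).
exists (N + d).+1; split=> // n x lt_Nd_n.
have -> : n * g = (n - d) * g + m p * m q by rewrite -dg_eq -mulnDl subnK //; lia.
apply: pos_comb_addmm_Z2; first exact: chi_pq.
by apply: large; lia.
Qed.
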